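(* Let $n\ge 3$ and let $S_n$ be a complete sun graph on $2n$ vertices. Then the sparing number of $S_n$ is $\varphi(S_n)=\frac{1}{2}(n^2-3n+6)$.
   Context: An $n$-sun ($n\ge3$) is a graph on $2n$ vertices whose vertex set is partitioned into $U=\{u_1,\dots,u_n\}$ and $W=\{w_1,\dots,w_n\}$, where $W$ is an independent set and $w_j$ is adjacent to $u_i$ if and only if $j=i$ or $j\equiv i+1 \pmod n$. A complete sun is an $n$-sun in which the induced subgraph on $U$ is complete. Let $\mathbb{N}_0$ be the set of non-negative integers; for $A,B\subseteq\mathbb{N}_0$, $A+B=\{a+b:a\in A,b\in B\}$. An integer additive set-indexer (IASI) of a graph $G$ is an injective map $f:V(G)\to\mathcal{P}(\mathbb{N}_0)$ such that $f^+:E(G)\to\mathcal{P}(\mathbb{N}_0)$, $f^+(uv)=f(u)+f(v)$, is injective. A weak IASI is an IASI with $|f^+(uv)|=\max(|f(u)|,|f(v)|)$ for every edge $uv$. An edge $e$ is mono-indexed if $|f^+(e)|=1$. The sparing number $\varphi(G)$ is the minimum number of mono-indexed edges over all weak IASIs of $G$. *)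

From mathcomp Require Import all_boot.
From mathcomp Require Import finmap.
Set Implicit Arguments. Unset Strict Implicit. Unset Printing Implicit Defensive.
Local Open Scope fset_scope.

(* Vertex set of the n-sun: inl i = u_i, inr j = w_j (0-based indices). *)
Definition sun_vertex (n : nat) : finType := ('I_n + 'I_n)%type.

Definition uw_adj (n : nat) (i j : 'I_n) : bool :=
  (nat_of_ord j == nat_of_ord i) || (nat_of_ord j == (nat_of_ord i).+1 %% n).

Definition complete_sun_adj (n : nat) : rel (sun_vertex n) :=
  fun x y =>
    match x, y with
    | inl i, inl j => i != j
    | inl i, inr j => uw_adj i j
    | inr j, inl i => uw_adj i j
    | inr _, inr _ => false
    end.

Definition sumset (A B : {fset nat}) : {fset nat} :=
  [fset addn a b | a in A, b in B].

Definition weak_IASI (V : finType) (adj : rel V) (f : V -> {fset nat}) : Prop :=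
  [/\ forall x, f x != fset0,
      injective f,
      (forall x y x' y', adj x y -> adj x' y' ->
          sumset (f x) (f y) = sumset (f x') (f y') -> [set x; y] = [set x'; y']) &
      (forall x y, adj x y ->
          #|` sumset (f x) (f y)| = maxn #|` f x| #|` f y|)].

Definition mono_edges (V : finType) (adj : rel V) (f : V -> {fset nat}) : nat :=
  #|[set e : {set V} | [exists x, exists y,
       [&& e == [set x; y], adj x y & #|` sumset (f x) (f y)| == 1]]]|.

Definition sparing_number_is (V : finType) (adj : rel V) (k : nat) : Prop :=
  (exists f, weak_IASI adj f /\ mono_edges adj f = k) /\
  (forall f, weak_IASI adj f -> k <= mono_edges adj f).

From mathcomp Require Import all_boot.
From mathcomp Require Import finmap zify.
Set Implicit Arguments. Unset Strict Implicit. Unset Printing Implicit Defensive.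

(* If |A|, |B| >= 2 then |A + B| > max(|A|, |B|), so in a weak IASI the vertices
   with non-singleton labels form an independent set I and the mono-indexed edges
   are exactly the edges avoiding I.  Conversely, labelling the vertices by
   distinct powers of two and adding 0 to the labels of an independent set I gives
   a weak IASI whose mono-indexed edges are exactly those avoiding I.  In the
   complete sun an independent set contains at most one u_i; the edges avoiding it
   include the clique on the other n - 1 vertices of U together with u_(i-1) w_i
   and u_(i+1) w_(i+1), i.e. at least C(n-1, 2) + 2 of them, and
   I = {u_0, w_2, ..., w_(n-1)} attains this bound. *)

Local Open Scope fset_scope.
Local Open Scope nat_scope.

Lemma in_sumset (A B : {fset nat}) m :
  reflect (exists2 a, a \in A & exists2 b, b \in B & m = a + b) (m \in sumset A B).
Proof. exact: imfset2P. Qed.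

Lemma sumsetC (A B : {fset nat}) : sumset A B = sumset B A.
Proof.
apply/fsetP => m; apply/in_sumset/in_sumset => -[x xA [y yB ->]];
  by exists y => //; exists x => //; rewrite addnC.
Qed.

Lemma card_sumset1l a (B : {fset nat}) : #|` sumset [fset a] B| = #|` B|.
Proof.
have -> : sumset [fset a] B = [fset a + b | b in B].
  apply/fsetP => m; apply/in_sumset/imfsetP.
  - by move=> [x]; rewrite in_fset1 => /eqP -> [b bB ->]; exists b.
  - by move=> [b /= bB ->]; exists a; rewrite ?in_fset1 //; exists b.
by rewrite card_imfset //; apply: addnI.
Qed.

Lemma card_sumset1r b (A : {fset nat}) : #|` sumset A [fset b]| = #|` A|.
Proof. by rewrite sumsetC card_sumset1l. Qed.

Lemma fset_nat_max (B : {fset nat}) :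
  B != fset0 -> exists2 m, m \in B & {in B, forall x, x <= m}.
Proof.
case/fset0Pn => y yB.
have ubB x : x \in B -> x <= \max_(b <- B) b by move=> xB; apply: leq_bigmax_seq.
by case: (ex_maxnP (ex_intro [eta mem B] y yB) ubB) => m mB mmax; exists m.
Qed.

Lemma card_sumset_gtl (A B : {fset nat}) :
  2 <= #|` A| -> 2 <= #|` B| -> #|` A| < #|` sumset A B|.
Proof.
move=> A2 B2.
have [am amA amax] : exists2 m, m \in A & {in A, forall x, x <= m}.
  by apply: fset_nat_max; rewrite -cardfs_gt0 (leq_trans _ A2).
have [bm bmB bmax] : exists2 m, m \in B & {in B, forall x, x <= m}.
  by apply: fset_nat_max; rewrite -cardfs_gt0 (leq_trans _ B2).
have [b bB b_lt] : exists2 b, b \in B & b < bm.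
  have /fsubsetPn [b bB] : ~~ (B `<=` [fset bm]).
    by apply: contraTN B2 => /fsubset_leq_card; rewrite cardfs1 ltnNge => ->.
  by rewrite in_fset1 => b_neq; exists b; rewrite // ltn_neqAle b_neq bmax.
(* [A + b] has [#|A|] elements, all below the extra element [am + bm]. *)
set Ab := [fset a + b | a in A].
have card_Ab : #|` Ab| = #|` A| by rewrite card_imfset //; apply: addIn.
have top_notin : am + bm \notin Ab.
  apply/imfsetP => -[a /= aA]; have := leq_add (amax a aA) b_lt; lia.
have sub : am + bm |` Ab `<=` sumset A B.
  apply/fsubsetP => x; rewrite in_fset1U => /orP [/eqP ->|/imfsetP [a /= aA ->]].
  - by apply/in_sumset; exists am => //; exists bm.
  - by apply/in_sumset; exists a => //; exists b.
by move/fsubset_leq_card: sub; rewrite cardfsU1 top_notin card_Ab.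
Qed.

Lemma trunc_log2_add_exp2 a b : a < b -> trunc_log 2 (2 ^ a + 2 ^ b) = b.
Proof.
move=> ab; apply: trunc_log_eq => //.
by rewrite leq_addl /= expnS mul2n -addnn ltn_add2r ltn_exp2l.
Qed.

Lemma add_exp2_inj a b c d :
  a < b -> c < d -> 2 ^ a + 2 ^ b = 2 ^ c + 2 ^ d -> a = c /\ b = d.
Proof.
move=> ab cd e.
have bd : b = d by rewrite -(trunc_log2_add_exp2 ab) e trunc_log2_add_exp2.
by split=> //; move: e; rewrite bd => /addIn /eqP; rewrite eqn_exp2l // => /eqP.
Qed.

Lemma add_exp2_pair a b c d : a != b -> c != d ->
  2 ^ a + 2 ^ b = 2 ^ c + 2 ^ d -> (a = c /\ b = d) \/ (a = d /\ b = c).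
Proof.
move=> + + e; case: (ltngtP a b) => // ab _; case: (ltngtP c d) => // cd _.
- by left; apply: add_exp2_inj.
- by right; apply: add_exp2_inj; rewrite // e addnC.
- by right; case: (add_exp2_inj ab cd); rewrite // addnC e.
- by left; case: (add_exp2_inj ab cd); rewrite // addnC e addnC.
Qed.

Section Graphs.
Variables (V : finType) (adj : rel V).

Definition independent (I : {set V}) : Prop :=
  {in I &, forall x y, ~~ adj x y}.

Lemma independent_adj_notin (I : {set V}) x y :
  independent I -> x \in I -> adj x y -> y \in ~: I.
Proof. by move=> indepI xI axy; rewrite inE; apply: contraL axy; apply: indepI. Qed.

Definition edges_within (S : {set V}) : {set {set V}} :=
  [set [set x; y] | x in S, y in S & adj x y].

Lemma clique_edges_within (T S : {set V}) :
  T \subset S -> {in T &, forall x y, x != y -> adj x y} ->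
  [set B : {set V} | B \subset T & #|B| == 2] \subset edges_within S.
Proof.
move=> sTS cliqueT; apply/subsetP => B.
rewrite inE => /andP [sBT /cards2P [x [y [xy defB]]]].
have xT : x \in T by apply: (subsetP sBT); rewrite defB !inE eqxx.
have yT : y \in T by apply: (subsetP sBT); rewrite defB !inE eqxx orbT.
rewrite defB; apply/imset2P; apply: Imset2spec (subsetP sTS x xT) _ _ => //.
by rewrite inE (subsetP sTS) ?cliqueT.
Qed.

Definition mono_vertices (f : V -> {fset nat}) : {set V} := [set x | #|` f x| == 1].

Section WeakIASI.
Variable f : V -> {fset nat}.
Hypothesis f_weak : weak_IASI adj f.

Lemma weak_IASI_card_gt0 x : 0 < #|` f x|.
Proof. by case: f_weak => label_neq0 _ _ _; rewrite cardfs_gt0. Qed.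

Lemma weak_IASI_nonmono_independent : independent (~: mono_vertices f).
Proof.
move=> x y; rewrite !inE => xn1 yn1; apply/negP => axy.
have x2 : 1 < #|` f x| by have := weak_IASI_card_gt0 x; lia.
have y2 : 1 < #|` f y| by have := weak_IASI_card_gt0 y; lia.
case: f_weak => _ _ _ /(_ x y axy) card_xy.
have := card_sumset_gtl x2 y2; have := card_sumset_gtl y2 x2.
by rewrite sumsetC card_xy; lia.
Qed.

Lemma mono_edgeE x y : adj x y ->
  (#|` sumset (f x) (f y)| == 1) = (x \in mono_vertices f) && (y \in mono_vertices f).
Proof.
case: f_weak => _ _ _ /[apply] ->; rewrite !inE.
by have := weak_IASI_card_gt0 x; have := weak_IASI_card_gt0 y; lia.
Qed.

Lemma mono_edgesE : mono_edges adj f = #|edges_within (mono_vertices f)|.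
Proof.
apply: eq_card => e; rewrite [in LHS]inE; apply/existsP/imset2P.
- case=> x /existsP [y /and3P [/eqP -> axy]]; rewrite mono_edgeE // => /andP [xM yM].
  by apply: (Imset2spec xM) => //; rewrite inE yM.
- case=> x y xM; rewrite inE => /andP [yM axy] ->.
  by exists x; apply/existsP; exists y; rewrite eqxx axy mono_edgeE // xM.
Qed.

End WeakIASI.

Section Pow2Labelling.
Variable I : {set V}.
Hypotheses (adj_irr : irreflexive adj) (I_indep : independent I).

(* Distinct powers of two keep every edge sum distinct. *)
Definition pow2_label (v : V) : {fset nat} :=
  if v \in I then [fset 0; 2 ^ enum_rank v] else [fset 2 ^ enum_rank v].

Lemma pow2_label_top v : 2 ^ enum_rank v \in pow2_label v.
Proof. by rewrite /pow2_label; case: ifP; rewrite !inE eqxx ?orbT. Qed.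

Lemma pow2_label_le v x : x \in pow2_label v -> x <= 2 ^ enum_rank v.
Proof.
by rewrite /pow2_label; case: ifP => _; rewrite !inE; [case/orP|]; move/eqP ->.
Qed.

Lemma card_pow2_label v : #|` pow2_label v| = (v \in I).+1.
Proof.
rewrite /pow2_label; case: ifP => _; rewrite ?cardfs1 // cardfs2.
by rewrite eq_sym -lt0n expn_gt0.
Qed.

Lemma mono_vertices_pow2_label : mono_vertices pow2_label = ~: I.
Proof. by apply/setP => v; rewrite !inE card_pow2_label; case: (v \in I). Qed.

Lemma sumset_pow2_label_le x y z :
  z \in sumset (pow2_label x) (pow2_label y) -> z <= 2 ^ enum_rank x + 2 ^ enum_rank y.
Proof. by move=> /in_sumset [a /pow2_label_le ax [b /pow2_label_le bx ->]]; apply: leq_add. Qed.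

Lemma sumset_pow2_label_top x y :
  2 ^ enum_rank x + 2 ^ enum_rank y \in sumset (pow2_label x) (pow2_label y).
Proof. by apply/in_sumset; do 2!(eexists; first exact: pow2_label_top). Qed.

Lemma pow2_label_weak : weak_IASI adj pow2_label.
Proof.
have sumE x y x' y' : sumset (pow2_label x) (pow2_label y) =
    sumset (pow2_label x') (pow2_label y') ->
    2 ^ enum_rank x + 2 ^ enum_rank y = 2 ^ enum_rank x' + 2 ^ enum_rank y'.
  move=> e; apply/eqP; rewrite eqn_leq !sumset_pow2_label_le //;
    by [rewrite -e sumset_pow2_label_top | rewrite e sumset_pow2_label_top].
have rank_neq x y : adj x y -> enum_rank x != enum_rank y.
  by apply: contraTN => /eqP /enum_rank_inj ->; rewrite adj_irr.
split.
- by move=> x; apply/fset0Pn; exists (2 ^ enum_rank x); apply: pow2_label_top.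
- move=> x y e; apply/enum_rank_inj/val_inj/eqP.
  rewrite eqn_leq -(leq_exp2l _ _ (ltnSn 1)) -[X in _ && X](leq_exp2l _ _ (ltnSn 1)).
  by apply/andP; split; apply: pow2_label_le; [rewrite -e | rewrite e]; apply: pow2_label_top.
- move=> x y x' y' axy axy' /sumE e.
  case: (add_exp2_pair (rank_neq _ _ axy) (rank_neq _ _ axy') e) => [[]|[]]
    /val_inj/enum_rank_inj -> /val_inj/enum_rank_inj -> //.
  by rewrite setUC.
- move=> x y axy; rewrite /pow2_label.
  case xI: (x \in I); case yI: (y \in I).
  + by move: (I_indep xI yI); rewrite axy.
  + by rewrite card_sumset1r cardfs2 cardfs1 eq_sym -lt0n expn_gt0.
  + by rewrite card_sumset1l cardfs2 cardfs1 eq_sym -lt0n expn_gt0.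
  + by rewrite card_sumset1l !cardfs1.
Qed.

End Pow2Labelling.
End Graphs.

Lemma ordS_neq n (i : 'I_n.+2) : ordS i != i.
Proof.
apply/eqP => /(congr1 val) /=; have := ltn_ord i.
case: (ltngtP i.+1 n.+2) => [lt|//|e]; first by rewrite modn_small //; lia.
by rewrite e modnn; lia.
Qed.

Section CompleteSun.
Variable m : nat.
Local Notation n := m.+3.
Local Notation V := (sun_vertex n).
Local Notation sun := (@complete_sun_adj n).

Lemma sun_irreflexive : irreflexive sun.
Proof. by case=> i /=; rewrite ?eqxx. Qed.

Lemma sun_inl_clique (A : {set 'I_n}) :
  {in inl @: A &, forall x y : V, x != y -> sun x y}.
Proof. by move=> _ _ /imsetP [i _ ->] /imsetP [j _ ->]; apply: contraNneq => ->. Qed.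

Lemma card_inl (A : {set 'I_n}) : #|inl @: A : {set V}| = #|A|.
Proof. by rewrite card_imset //; apply: inl_inj. Qed.

Lemma sun_edges_within_U (S : {set V}) :
  inl @: [set: 'I_n] \subset S -> 'C(m.+2, 2) + 2 <= #|edges_within sun S|.
Proof.
move=> sub; move: (subset_leq_card (clique_edges_within sub (@sun_inl_clique _))).
by rewrite cards_draws card_inl cardsT card_ord binS bin1; apply: leq_trans; rewrite leq_add2l.
Qed.

(* An independent [I] contains at most one [u_i]; if it does, the [n - 1] other
   [u_j] span a clique and the edges [u_(i-1) w_i] and [u_(i+1) w_(i+1)] are
   also left over. *)
Lemma sun_edges_within_lower (I : {set V}) :
  independent sun I -> 'C(m.+2, 2) + 2 <= #|edges_within sun (~: I)|.
Proof.
move=> indepI.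
case: (boolP [exists i, inl i \in I]) => [/existsP [i uiI] | /existsPn noU]; last first.
  apply: sun_edges_within_U; apply/subsetP => _ /imsetP [i _ ->].
  by rewrite inE noU.
set T := inl @: [set~ i] : {set V}.
have sub : T \subset ~: I.
  apply/subsetP => _ /imsetP [j ji ->]; apply: (independent_adj_notin indepI uiI).
  by rewrite /= eq_sym -in_setC1.
set D := [set B : {set V} | B \subset T & #|B| == 2].
have inr_notin_D j (B : {set V}) : inr j \in B -> B \notin D.
  by move=> wB; rewrite inE negb_and; apply/orP; left; apply/subsetPn;
     exists (inr j) => //; apply/imsetP => -[].
set p := ord_pred i.
have pS : ordS p = i by apply: ord_predK.
have p_neq : p != i by apply: contra_neq (ordS_neq p) => e; rewrite pS e.
set E1 : {set V} := [set inl p; inr i].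
set E2 : {set V} := [set inl (ordS i); inr (ordS i)].
have E_in x j : x \in T -> sun x (inr j) -> inr j \in ~: I ->
    [set x; inr j] \in edges_within sun (~: I).
  move=> xT xw wI; apply/imset2P.
  by apply: (Imset2spec (x2 := inr j) (subsetP sub x xT)); rewrite // inE wI.
have wS j : sun (inl i) (inr j) -> inr j \in ~: I.
  exact: independent_adj_notin indepI uiI.
have E1_in : E1 \in edges_within sun (~: I).
  apply: E_in; first by apply: imset_f; rewrite in_setC1.
    by rewrite /= /uw_adj; apply/orP; right; apply/eqP; rewrite -[in LHS]pS.
  by apply: wS; rewrite /= /uw_adj eqxx.
have E2_in : E2 \in edges_within sun (~: I).
  apply: E_in; first by apply: imset_f; rewrite in_setC1 ordS_neq.
    by rewrite /= /uw_adj eqxx.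
  by apply: wS; rewrite /= /uw_adj eqxx orbT.
have E12 : E1 != E2.
  apply/negP => /eqP e; have : inr i \in E2 by rewrite -e !inE eqxx orbT.
  by rewrite !inE => /orP [//|/eqP [] ei]; move: (ordS_neq i); rewrite -ei eqxx.
have E1_notin : E1 \notin E2 |: D.
  by rewrite in_setU1 negb_or E12 (@inr_notin_D i) // !inE eqxx orbT.
have sub_edges : E1 |: (E2 |: D) \subset edges_within sun (~: I).
  by rewrite !subUset !sub1set E1_in E2_in clique_edges_within //; apply: sun_inl_clique.
move: (subset_leq_card sub_edges).
rewrite cardsU1 E1_notin cardsU1 (@inr_notin_D (ordS i)) ?inE ?eqxx ?orbT //.
by rewrite cards_draws card_inl cardsC1 card_ord !add1n addn2.
Qed.

Definition sun_spare : {set V} :=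
  [set v : V | match v with inl i => i == ord0 | inr j => 1 < j end].

Lemma sun_spare_independent : independent sun sun_spare.
Proof.
move=> [i|j] [i'|j']; rewrite !inE //=.
- by move=> /eqP -> /eqP ->; rewrite eqxx.
- by move=> /eqP -> j'_gt1; rewrite /uw_adj /= modn_small //; lia.
- by move=> j_gt1 /eqP ->; rewrite /uw_adj /= modn_small //; lia.
Qed.

Definition sun_edge_last : {set V} := [set inl ord_max; inr ord0].
Definition sun_edge_one : {set V} :=
  [set inl (Ordinal (isT : 1 < n)); inr (Ordinal (isT : 1 < n))].

Lemma sun_edge_w01 i j : uw_adj i j -> i != ord0 -> j < 2 ->
  [set inl i; inr j] \in [set sun_edge_last; sun_edge_one].
Proof.
rewrite /uw_adj -val_eqE /= => adj_ij i_neq0 j_lt2.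
have [[ei ej] | [ei ej]] : (i = n.-1 :> nat /\ j = 0 :> nat) \/ (i = 1 :> nat /\ j = 1 :> nat).
  case: (ltngtP i.+1 n) => [lt|gt|e].
  - by move: adj_ij; rewrite modn_small //; lia.
  - by move: gt (ltn_ord i); lia.
  - by move: adj_ij; rewrite e modnn; lia.
- have -> : i = ord_max by apply: val_inj.
  have -> : j = ord0 by apply: val_inj.
  by rewrite !inE eqxx.
- have -> : i = Ordinal (isT : 1 < n) by apply: val_inj.
  have -> : j = Ordinal (isT : 1 < n) by apply: val_inj.
  by rewrite !inE eqxx orbT.
Qed.

Lemma sun_edges_within_spare :
  #|edges_within sun (~: sun_spare)| <= 'C(m.+2, 2) + 2.
Proof.
set D := [set B : {set V} | B \subset inl @: [set~ ord0] & #|B| == 2].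
have sub : edges_within sun (~: sun_spare) \subset D :|: [set sun_edge_last; sun_edge_one].
  apply/subsetP => _ /imset2P [x y xS /setIdP [yS axy] ->].
  apply/setUP; move: xS yS axy; rewrite !inE.
  case: x => i; case: y => j //= iS jS axy; [left | right | right].
  - rewrite cards2 axy andbT subUset !sub1set; apply/andP; split;
      by apply: imset_f; rewrite in_setC1.
  - by rewrite -in_set2; apply: sun_edge_w01; rewrite // ltnNge.
  - by rewrite -in_set2 setUC; apply: sun_edge_w01; rewrite // ltnNge.
apply: leq_trans (subset_leq_card sub) _.
rewrite cardsU cards_draws card_inl cardsC1 card_ord; apply: leq_trans (leq_subr _ _) _.
by rewrite leq_add2l cards2 ltnS leq_b1.
Qed.

End CompleteSun.

Lemma sun_sparing_value m : (m.+3 ^ 2 - 3 * m.+3 + 6) %/ 2 = 'C(m.+2, 2) + 2.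
Proof. by rewrite bin2 -divn2 -mulnn; nia. Qed.

Theorem theorem2p3 (n : nat) (hn : 3 <= n) :
  sparing_number_is (@complete_sun_adj n) ((n ^ 2 - 3 * n + 6) %/ 2).
Proof.
case: n hn => [|[|[|m]]] // _; rewrite sun_sparing_value.
have spare_weak := pow2_label_weak (@sun_irreflexive m) (@sun_spare_independent m).
split.
- exists (pow2_label (sun_spare m)); split => //; apply/eqP.
  rewrite mono_edgesE // mono_vertices_pow2_label eqn_leq sun_edges_within_spare.
  exact: sun_edges_within_lower (@sun_spare_independent m).
- move=> f f_weak; rewrite mono_edgesE // -[mono_vertices f]setCK.
  exact/sun_edges_within_lower/weak_IASI_nonmono_independent.
Qed.
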